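(* Any $\omega$-recognizable preorder $\preceq$ on $\Sigma^\omega$ can be embedded into an $\omega$-recognizable total preorder $\preceq'$ (i.e., $\preceq\subseteq\preceq'$). Moreover, for all $x,y\in\Sigma^\omega$, if $x\bowtie y$ then $x\bowtie' y$, for each $\bowtie\in\{\preceq,\prec,\succeq,\succ,\sim\}$, where $\bowtie'$ denotes the corresponding relation derived from $\preceq'$.
   Context: A relation on $\Sigma^\omega$ is $\omega$-recognizable if it equals $\bigcup_{k=1}^{\ell}X_k\times Y_k$ with $X_k,Y_k$ $\omega$-regular. A preorder is reflexive and transitive; it is total if for all $x,y$, $x\preceq y$ or $y\preceq x$. From a preorder $\preceq$: $x\succeq y$ iff $y\preceq x$; $x\prec y$ iff $x\preceq y$ and $y\not\preceq x$; $x\succ y$ iff $y\prec x$; $x\sim y$ iff $x\preceq y$ and $y\preceq x$. *)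

From mathcomp Require Import all_boot.
Set Implicit Arguments. Unset Strict Implicit. Unset Printing Implicit Defensive.

Definition oword (Sigma : finType) := nat -> Sigma.

Record buchi (Sigma : finType) := Buchi {
  b_size : nat;
  b_init : {set 'I_b_size};
  b_delta : 'I_b_size -> Sigma -> {set 'I_b_size};
  b_acc : {set 'I_b_size} }.

Definition buchi_accepts (Sigma : finType) (A : buchi Sigma) (w : oword Sigma) : Prop :=
  exists r : nat -> 'I_(b_size A),
    r 0 \in @b_init _ A /\
    (forall i, r i.+1 \in @b_delta _ A (r i) (w i)) /\
    (forall i, exists j, i <= j /\ r j \in @b_acc _ A).

Definition omega_regular (Sigma : finType) (L : oword Sigma -> Prop) : Prop :=
  exists A : buchi Sigma, forall w, L w <-> buchi_accepts A w.

Definition omega_recognizable (Sigma : finType)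
    (R : oword Sigma -> oword Sigma -> Prop) : Prop :=
  exists (l : nat) (X Y : nat -> oword Sigma -> Prop),
    (forall k, k < l -> omega_regular (X k) /\ omega_regular (Y k)) /\
    (forall x y, R x y <-> exists k, k < l /\ X k x /\ Y k y).

Definition preorder_rel (T : Type) (R : T -> T -> Prop) : Prop :=
  (forall x, R x x) /\ (forall x y z, R x y -> R y z -> R x z).

Definition total_rel (T : Type) (R : T -> T -> Prop) : Prop :=
  forall x y, R x y \/ R y x.

Definition rel_ge (T : Type) (R : T -> T -> Prop) (x y : T) : Prop := R y x.
Definition rel_lt (T : Type) (R : T -> T -> Prop) (x y : T) : Prop := R x y /\ ~ R y x.
Definition rel_gt (T : Type) (R : T -> T -> Prop) (x y : T) : Prop := rel_lt R y x.
Definition rel_sim (T : Type) (R : T -> T -> Prop) (x y : T) : Prop := R x y /\ R y x.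

From mathcomp Require Import all_boot.
From mathcomp Require Import boolp zify.
Set Implicit Arguments. Unset Strict Implicit. Unset Printing Implicit Defensive.

(* Write the preorder as a union of rectangles X_k x Y_k, k < l, and rank x by
   the number of indices k such that Y_k meets the down-set of x.  The rank is
   monotone, and strictly so on strict pairs: if x < x', the index k with
   x' in X_k and x' in Y_k counts for x' but not for x.  So comparing ranks is a
   total preorder extending the given one and preserving strictness.  It is
   recognizable because, for any monotone f, the set {x | f x <= j} is the
   union of those X_k whose partner Y_k contains some x0 with f x0 <= j, and
   dually for {y | j <= f y}: each side of the resulting rectangles is an X_k,
   a Y_k or empty. *)

Section RectangularPreorder.

Variables (T : Type) (R : T -> T -> Prop) (l : nat) (X Y : nat -> T -> Prop).
Hypothesis R_rect : forall x y, R x y <-> exists k, k < l /\ X k x /\ Y k y.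
Hypothesis R_refl : forall x, R x x.

Lemma rect_diag x : exists k, k < l /\ X k x /\ Y k x.
Proof. exact/R_rect. Qed.

Section MonotoneFunction.

Variable f : T -> nat.
Hypothesis f_mono : forall x y, R x y -> f x <= f y.

Lemma monotone_leq_cover j x :
  f x <= j <-> exists k, k < l /\ X k x /\ exists x0, Y k x0 /\ f x0 <= j.
Proof.
split=> [fx_le | [k [lt_k [Xx [x0 [Yx0 fx0_le]]]]]].
  have [k [lt_k [Xx Yx]]] := rect_diag x.
  by exists k; do 2!split=> //; exists x.
by apply: leq_trans fx0_le; apply/f_mono/R_rect; exists k.
Qed.

Lemma monotone_geq_cover j y :
  j <= f y <-> exists k, k < l /\ Y k y /\ exists y0, X k y0 /\ j <= f y0.
Proof.
split=> [le_fy | [k [lt_k [Yy [y0 [Xy0 le_fy0]]]]]].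
  have [k [lt_k [Xy Yy]]] := rect_diag y.
  by exists k; do 2!split=> //; exists y.
by apply: leq_trans le_fy0 _; apply/f_mono/R_rect; exists k.
Qed.

End MonotoneFunction.

Hypothesis R_trans : forall x y z, R x y -> R y z -> R x z.

Definition downset_indices x : {set 'I_l} :=
  [set k : 'I_l | `[< exists y, Y k y /\ R y x >]].

Definition rank x := #|downset_indices x|.

Lemma downset_indices_sub x x' :
  R x x' -> downset_indices x \subset downset_indices x'.
Proof.
move=> Rxx'; apply/subsetP => k; rewrite !inE => /asboolP [y [Yy Ryx]].
by apply/asboolP; exists y; split=> //; apply: R_trans Rxx'.
Qed.

Lemma rank_le x x' : R x x' -> rank x <= rank x'.
Proof. by move/downset_indices_sub/subset_leq_card. Qed.

Lemma rank_lt x x' : R x x' -> ~ R x' x -> rank x < rank x'.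
Proof.
move=> Rxx' nRx'x; apply/proper_card; rewrite properE downset_indices_sub //=.
have [k [lt_k [Xx' Yx']]] := rect_diag x'.
apply/subsetPn; exists (Ordinal lt_k); rewrite inE.
  by apply/asboolP; exists x'.
apply/asboolP => - [y [Yy Ryx]]; apply: nRx'x.
by apply: R_trans Ryx; apply/R_rect; exists k.
Qed.

Lemma rank_bound x : rank x < l.+1.
Proof. by rewrite ltnS -[leqRHS]card_ord max_card. Qed.

End RectangularPreorder.

Section OmegaRecognizable.

Variable Sigma : finType.

Lemma omega_regular_ext (L L' : oword Sigma -> Prop) :
  (forall w, L w <-> L' w) -> omega_regular L -> omega_regular L'.
Proof. by move=> eqL [A accA]; exists A => w; rewrite -eqL. Qed.

Lemma omega_regular0 : omega_regular (fun _ : oword Sigma => False).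
Proof.
exists (@Buchi Sigma 1 set0 (fun _ _ => set0) set0) => w; split=> //.
by case=> r []; rewrite inE.
Qed.

Lemma omega_regular_guard (P : Prop) (L : oword Sigma -> Prop) :
  omega_regular L -> omega_regular (fun w => P /\ L w).
Proof.
case: (pselect P) => [p | np] regL.
  by apply: omega_regular_ext regL => w; split=> [|[]].
by apply: omega_regular_ext omega_regular0 => w; split=> [|[]].
Qed.

Lemma omega_recognizable_ext (R R' : oword Sigma -> oword Sigma -> Prop) :
  (forall x y, R x y <-> R' x y) -> omega_recognizable R -> omega_recognizable R'.
Proof.
move=> eqR [l [X [Y [regXY R_rect]]]].
by exists l, X, Y; split=> // x y; rewrite -eqR.
Qed.

Lemma omega_recognizable0 : omega_recognizable (fun _ _ : oword Sigma => False).
Proof.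
by exists 0, (fun _ _ => False), (fun _ _ => False); split=> // x y; split=> // -[k []].
Qed.

Lemma omega_recognizable_rect (A B : oword Sigma -> Prop) :
  omega_regular A -> omega_regular B -> omega_recognizable (fun x y => A x /\ B y).
Proof.
move=> regA regB; exists 1, (fun _ => A), (fun _ => B); split=> // x y.
by split=> [ABxy | [k [_ ABxy]]]; first exists 0.
Qed.

Lemma omega_recognizable_union (R1 R2 : oword Sigma -> oword Sigma -> Prop) :
  omega_recognizable R1 -> omega_recognizable R2 ->
  omega_recognizable (fun x y => R1 x y \/ R2 x y).
Proof.
move=> [l1 [X1 [Y1 [reg1 rect1]]]] [l2 [X2 [Y2 [reg2 rect2]]]].
pose glue (Z1 Z2 : nat -> oword Sigma -> Prop) k :=
  if k < l1 then Z1 k else Z2 (k - l1).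
exists (l1 + l2), (glue X1 X2), (glue Y1 Y2); split.
  move=> k lt_k; rewrite /glue; case: ltnP => [/reg1 // | le_k].
  by apply: reg2; lia.
move=> x y; rewrite rect1 rect2 /glue; split.
  case=> [[k [lt_k XYk]] | [k [lt_k XYk]]].
    by exists k; rewrite lt_k; split=> //; lia.
  exists (l1 + k); have -> : (l1 + k < l1) = false by lia.
  by rewrite addKn; split=> //; lia.
case=> k [lt_k]; case: ltnP => [lt_k1 XYk | le_k XYk]; first by left; exists k.
by right; exists (k - l1); split=> //; lia.
Qed.

Lemma omega_recognizable_bigcup n (Rj : nat -> oword Sigma -> oword Sigma -> Prop) :
  (forall j, j < n -> omega_recognizable (Rj j)) ->
  omega_recognizable (fun x y => exists j, j < n /\ Rj j x y).
Proof.
elim: n => [_ | n IHn recR].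
  by apply: omega_recognizable_ext omega_recognizable0 => x y; split=> // -[j []].
apply: omega_recognizable_ext
  (omega_recognizable_union (IHn (fun j lt_j => recR j (ltnW lt_j))) (recR n _)) => // x y.
split=> [[[j [lt_j Rxy]] | Rxy] | [j []]]; first by exists j; split=> //; lia.
  by exists n.
by rewrite ltnS leq_eqVlt => /orP[/eqP-> | lt_j] Rxy; [right | left; exists j].
Qed.

Lemma omega_recognizable_monotone_order (R : oword Sigma -> oword Sigma -> Prop)
    l (X Y : nat -> oword Sigma -> Prop) (f : oword Sigma -> nat) N :
  (forall k, k < l -> omega_regular (X k) /\ omega_regular (Y k)) ->
  (forall x y, R x y <-> exists k, k < l /\ X k x /\ Y k y) ->
  (forall x, R x x) -> (forall x y, R x y -> f x <= f y) -> (forall x, f x < N) ->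
  omega_recognizable (fun x y => f x <= f y).
Proof.
move=> regXY R_rect R_refl f_mono f_bound.
have cover_le := monotone_leq_cover R_rect R_refl f_mono.
have cover_ge := monotone_geq_cover R_rect R_refl f_mono.
pose side j k k' x y := ((exists x0, Y k x0 /\ f x0 <= j) /\ X k x) /\
                        ((exists y0, X k' y0 /\ j <= f y0) /\ Y k' y).
apply: (@omega_recognizable_ext
  (fun x y => exists j, j < N /\ exists k, k < l /\ exists k', k' < l /\ side j k k' x y)).
  move=> x y; split=> [[j [_ [k [lt_k [k' [lt_k' [[Yx0 Xx] [Xy0 Yy]]]]]]]] | le_fxy].
    have le_fx : f x <= j by apply/cover_le; exists k.
    have ge_fy : j <= f y by apply/cover_ge; exists k'.
    exact: leq_trans ge_fy.
  have [k [lt_k [Xx Yx0]]] := (cover_le _ x).1 (leqnn _).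
  have [k' [lt_k' [Yy Xy0]]] := (cover_ge _ y).1 le_fxy.
  by exists (f x); split=> //; exists k; split=> //; exists k'.
apply: omega_recognizable_bigcup => j _; apply: omega_recognizable_bigcup => k lt_k.
apply: omega_recognizable_bigcup => k' lt_k'.
by apply: omega_recognizable_rect; apply: omega_regular_guard;
  [apply: (regXY k lt_k).1 | apply: (regXY k' lt_k').2].
Qed.

End OmegaRecognizable.

Theorem proposition12 (Sigma : finType) (R : oword Sigma -> oword Sigma -> Prop) :
  omega_recognizable R -> preorder_rel R ->
  exists R' : oword Sigma -> oword Sigma -> Prop,
    omega_recognizable R' /\ preorder_rel R' /\ total_rel R' /\
    (forall x y, R x y -> R' x y) /\
    (forall x y, R x y -> R' x y) /\
    (forall x y, rel_lt R x y -> rel_lt R' x y) /\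
    (forall x y, rel_ge R x y -> rel_ge R' x y) /\
    (forall x y, rel_gt R x y -> rel_gt R' x y) /\
    (forall x y, rel_sim R x y -> rel_sim R' x y).
Proof.
move=> [l [X [Y [regXY R_rect]]]] [R_refl R_trans].
pose r := rank R l Y.
have r_le x y : R x y -> r x <= r y by apply: rank_le.
have r_lt x y : rel_lt R x y -> rel_lt (fun x y => r x <= r y) x y.
  move=> [Rxy /(rank_lt R_rect R_refl R_trans Rxy) lt_r].
  by split; [exact: ltnW | apply/negP; rewrite -ltnNge].
exists (fun x y => r x <= r y); split.
  exact: omega_recognizable_monotone_order regXY R_rect R_refl r_le (rank_bound R l Y).
split; first by split=> [x | x y z]; lia.
split; first by move=> x y; lia.
split; first exact: r_le.
split; first exact: r_le.
split; first exact: r_lt.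
split; first by move=> x y /r_le.
split; first by move=> x y /r_lt.
by move=> x y [/r_le ? /r_le ?].
Qed.
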